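(* Let $p,q\geq 2$ be integers. (i) $\chi_{\mathrm{so}}(K_p\Box K_q)=pq$. (ii) If both $p$ and $q$ are odd (and at least $3$), then $\chi_{\mathrm{so}}(K_p\times K_q)=pq$. (iii) If $p$ is even and $q$ is odd, then $\chi_{\mathrm{so}}(K_p\times K_q)=q$. (iv) If both $p$ and $q$ are even, then $\chi_{\mathrm{so}}(K_p\times K_q)=\min(p,q)$.
   Context: A strong odd coloring of a simple graph $G$ is a proper vertex coloring of $G$ such that for every non-isolated vertex $v$ and every color $c$, either no vertex of the open neighborhood $N_G(v)$ has color $c$, or color $c$ is used on an odd number of vertices of $N_G(v)$; $\chi_{\mathrm{so}}(G)$ is the minimum number of colors in such a coloring. $K_n$ is the complete graph on $n$ vertices. The Cartesian product $G\Box H$ has vertex set $V_G\times V_H$, with $(g,h)(g',h')$ an edge iff ($g=g'$ and $hh'\in E_H$) or ($gg'\in E_G$ and $h=h'$). The direct product $G\times H$ has vertex set $V_G\times V_H$, with $(g,h)(g',h')$ an edge iff $gg'\in E_G$ and $hh'\in E_H$. *)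

From mathcomp Require Import all_boot.
Set Implicit Arguments. Unset Strict Implicit. Unset Printing Implicit Defensive.

(* A simple graph on a finite vertex type T is a symmetric irreflexive
   relation e : rel T (the graphs below are all of this kind). *)

Definition complete_rel (n : nat) : rel 'I_n := fun i j => i != j.

Definition cart_rel (T U : finType) (eG : rel T) (eH : rel U) : rel (T * U) :=
  fun x y => ((x.1 == y.1) && eH x.2 y.2) || (eG x.1 y.1 && (x.2 == y.2)).

Definition direct_rel (T U : finType) (eG : rel T) (eH : rel U) : rel (T * U) :=
  fun x y => eG x.1 y.1 && eH x.2 y.2.

Definition proper_col (T : finType) (e : rel T) (k : nat) (c : {ffun T -> 'I_k}) : bool :=
  [forall u, forall v, e u v ==> (c u != c v)].

Definition strong_odd_col (T : finType) (e : rel T) (k : nat) (c : {ffun T -> 'I_k}) : bool :=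
  proper_col e c &&
  [forall v, [exists u, e v u] ==>
     [forall a : 'I_k, (#|[set u | e v u & c u == a]| == 0) ||
                       odd #|[set u | e v u & c u == a]| ]].

Definition has_so_col (T : finType) (e : rel T) (k : nat) : bool :=
  [exists c : {ffun T -> 'I_k}, strong_odd_col e c].

(* For a loopless graph one always exists with k = #|T| (injective colouring),
   so we minimise over k <= #|T|; the default #|T| is never reached
   by the minimum unless it is the actual value. *)
Definition chi_so (T : finType) (e : rel T) : nat :=
  \big[minn/#|T|]_(k < #|T|.+1 | has_so_col e k) (k : nat).
Arguments complete_rel n : clear implicits.

From mathcomp Require Import all_boot.
Set Implicit Arguments. Unset Strict Implicit. Unset Printing Implicit Defensive.

(* In K_p □ K_q two vertices u, v of the same colour can share neither a row
   nor a column, and then (u.1, v.2) sees exactly u and v in that colour; so a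
   strong odd colouring is injective.
   In K_p × K_q two vertices of the same colour share a row or a column, so a
   colour class lies in one line and has at most max(p, q) elements. If the
   class has two vertices in row a, with column set B there, a vertex (x, y)
   with x <> a sees exactly B \ {y} in that colour; this count is nonzero,
   hence odd, for every y, which forces B to be all q columns and q to be
   even. So for q odd a class has at most p elements, and for p, q odd the
   colouring is injective. Conversely, when p is even, colouring by columns is
   strongly odd: each vertex sees p - 1 vertices of every other colour. *)

Lemma chi_so_eq_min (T : finType) (e : rel T) k0 :
  k0 <= #|T| -> has_so_col e k0 -> (forall k, has_so_col e k -> k0 <= k) ->
  chi_so e = k0.
Proof.
move=> le_k0 so_k0 min_k0; apply/eqP; rewrite eqn_leq; apply/andP; split.
  have lt_k0 : k0 < #|T|.+1 by [].
  rewrite /chi_so; elim: (index_enum _) (mem_index_enum (Ordinal lt_k0)) => // j r IH.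
  rewrite inE big_cons => /predU1P [<-|/IH le_r]; first by rewrite so_k0 geq_minl.
  by case: ifP => // _; rewrite geq_min le_r orbT.
apply: (big_ind (fun m => k0 <= m)) => // [x y|k /min_k0 //].
by rewrite leq_min => -> ->.
Qed.

Lemma card_leq_colour_classes (T : finType) k (c : T -> 'I_k) M :
  (forall a, #|[set x | c x == a]| <= M) -> #|T| <= k * M.
Proof.
move=> leM; rewrite -sum1_card (partition_big c xpredT) //=.
rewrite -[k in k * M]card_ord -sum_nat_const; apply: leq_sum => a _.
by rewrite sum1dep_card; apply: leq_trans (leM a); rewrite cardsE.
Qed.

Section StrongOddColouring.
Variables (T : finType) (e : rel T) (k : nat) (c : {ffun T -> 'I_k}).

Lemma strong_odd_col_nadj u v : strong_odd_col e c -> c u = c v -> e u v = false.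
Proof.
case/andP => /forallP /(_ u) /forallP /(_ v) /implyP proper_c _ cuv.
by apply/negP => /proper_c; rewrite cuv eqxx.
Qed.

Lemma strong_odd_col_odd v a :
  strong_odd_col e c -> 0 < #|[set u | e v u & c u == a]| ->
  odd #|[set u | e v u & c u == a]|.
Proof.
case/andP => _ /forallP /(_ v) /implyP odd_c pos.
have [w] := card_gt0P pos; rewrite inE => /andP [evw _].
have /forallP /(_ a) := odd_c (introT existsP (ex_intro _ w evw)).
by rewrite eqn0Ngt pos.
Qed.

End StrongOddColouring.

Lemma has_so_col_card (T : finType) (e : rel T) :
  irreflexive e -> has_so_col e #|T|.
Proof.
move=> irr_e; apply/existsP; exists [ffun x => enum_rank x]; apply/andP; split.
  apply/forallP => u; apply/forallP => v; apply/implyP => euv; rewrite !ffunE.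
  by apply: contraTneq euv => /enum_rank_inj ->; rewrite irr_e.
apply/forallP => v; apply/implyP => _; apply/forallP => a.
have : #|[set u | e v u & [ffun x => enum_rank x] u == a]| <= 1.
  rewrite -(cards1 (enum_val a)); apply: subset_leq_card; apply/subsetP => u.
  by rewrite !inE ffunE => /andP [_ /eqP <-]; rewrite enum_rankK.
by case: #|_| => [|[|]].
Qed.

Lemma chi_so_injective (T : finType) (e : rel T) :
  irreflexive e ->
  (forall k (c : {ffun T -> 'I_k}), strong_odd_col e c -> injective c) ->
  chi_so e = #|T|.
Proof.
move=> irr_e so_inj; apply: chi_so_eq_min => //; first exact: has_so_col_card.
move=> k /existsP [c /so_inj inj_c].
by rewrite -[k in _ <= k]card_ord; apply: leq_card inj_c.
Qed.

Lemma strong_odd_col_bij (T U : finType) (e : rel T) (e' : rel U) (f : U -> T) k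
    (c : {ffun T -> 'I_k}) :
  bijective f -> (forall x y, e' x y = e (f x) (f y)) ->
  strong_odd_col e c -> strong_odd_col e' [ffun x => c (f x)].
Proof.
move=> bij_f ef /andP [proper_c odd_c]; apply/andP; split.
  apply/forallP => u; apply/forallP => v; rewrite ef !ffunE.
  by move/forallP: proper_c => /(_ (f u)) /forallP /(_ (f v)).
apply/forallP => v; apply/implyP => /existsP [w evw]; apply/forallP => a.
have -> : [set u | e' v u & [ffun x => c (f x)] u == a] =
          f @^-1: [set t | e (f v) t & c t == a].
  by apply/setP => u; rewrite !inE ef ffunE.
rewrite on_card_preimset; last exact: onW_bij.
have nbr_fv : [exists t, e (f v) t] by apply/existsP; exists (f w); rewrite -ef.
by move/forallP: odd_c => /(_ (f v)) /implyP /(_ nbr_fv) /forallP.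
Qed.

Lemma has_so_col_bij (T U : finType) (e : rel T) (e' : rel U) (f : U -> T) k :
  bijective f -> (forall x y, e' x y = e (f x) (f y)) ->
  has_so_col e k -> has_so_col e' k.
Proof.
move=> bij_f ef /existsP [c so_c]; apply/existsP.
by exists [ffun x => c (f x)]; apply: strong_odd_col_bij so_c.
Qed.

Local Notation cart_complete p q := (cart_rel (complete_rel p) (complete_rel q)).
Local Notation direct_complete p q := (direct_rel (complete_rel p) (complete_rel q)).

Lemma card_prod_ord p q : #|{: 'I_p * 'I_q}| = p * q.
Proof. by rewrite card_prod !card_ord. Qed.

Lemma cart_completeE p q (u v : 'I_p * 'I_q) :
  cart_complete p q u v = (u != v) && ((u.1 == v.1) || (u.2 == v.2)).
Proof.
case: u v => [a b] [a' b']; rewrite /cart_rel /complete_rel xpair_eqE /=.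
by case: eqP; case: eqP.
Qed.

Lemma cart_complete_so_injective p q k (c : {ffun 'I_p * 'I_q -> 'I_k}) :
  strong_odd_col (cart_complete p q) c -> injective c.
Proof.
move=> so_c.
have same_line u v : c u = c v -> (u.1 == v.1) || (u.2 == v.2) -> u = v.
  move=> cuv line; apply/eqP; move: (strong_odd_col_nadj so_c cuv).
  by rewrite cart_completeE line andbT => /negbFE.
move=> u v cuv; case: (eqVneq u v) => // neq_uv; exfalso.
have neq1 : u.1 != v.1 by apply: contra neq_uv => eq1; rewrite (same_line u v) ?eq1.
have neq2 : u.2 != v.2.
  by apply: contra neq_uv => eq2; rewrite (same_line u v) ?eq2 ?orbT.
(* w sees exactly u and v in colour c u: a nonzero even count. *)
pose w := (u.1, v.2).
have nbrs : [set z | cart_complete p q w z & c z == c u] = [set u; v].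
  apply/setP => z; rewrite !inE cart_completeE /=; apply/idP/idP.
    case/andP => /andP [_ /orP [line | line]] /eqP czu; rewrite eq_sym in line.
      by rewrite (same_line z u czu) ?line ?eqxx.
    by rewrite (same_line z v (etrans czu cuv)) ?line ?eqxx ?orbT.
  case/orP => /eqP ->; rewrite ?cuv !eqxx ?orbT !andbT -pair_eqE /= negb_and.
    by rewrite eq_sym neq2 orbT.
  by rewrite neq1.
have := strong_odd_col_odd (v := w) (a := c u) so_c.
by rewrite nbrs cards2 neq_uv => /(_ isT).
Qed.

Lemma chi_so_cart_complete p q : chi_so (cart_complete p q) = p * q.
Proof.
rewrite -card_prod_ord; apply: chi_so_injective => [u | k c].
  by rewrite cart_completeE eqxx.
exact: cart_complete_so_injective.
Qed.

Lemma exists_ord_neq n (i : 'I_n) : 1 < n -> exists j : 'I_n, j != i.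
Proof.
case: n i => [|[|n]] i // _; exists (if i == ord0 then ord_max else ord0).
by case: (eqVneq i ord0) => [-> //|]; rewrite eq_sym.
Qed.

Lemma direct_completeE p q (u v : 'I_p * 'I_q) :
  direct_complete p q u v = (u.1 != v.1) && (u.2 != v.2).
Proof. by []. Qed.

Lemma direct_complete_swap p q (x y : 'I_q * 'I_p) :
  direct_complete q p x y = direct_complete p q (swap_pair x) (swap_pair y).
Proof. by rewrite !direct_completeE andbC. Qed.

Section DirectCompleteColouring.
Variables (p q k : nat) (c : {ffun 'I_p * 'I_q -> 'I_k}).
Hypothesis so_c : strong_odd_col (direct_complete p q) c.

Lemma direct_same_colour_line u v : c u = c v -> u.1 = v.1 \/ u.2 = v.2.
Proof.
move/(strong_odd_col_nadj so_c); rewrite direct_completeE.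
by case/nandP => /negPn /eqP; [left | right].
Qed.

Lemma direct_same_colour_row a b b' z :
  c (a, b) = c (a, b') -> b != b' -> c z = c (a, b) -> z.1 = a.
Proof.
move=> cbb' neq_bb' cz; case: (direct_same_colour_line cz) => //= z2b.
case: (direct_same_colour_line (etrans cz cbb')) => //= z2b'.
by move: neq_bb'; rewrite -z2b -z2b' eqxx.
Qed.

Lemma direct_row_even a b b' : 1 < p -> c (a, b) = c (a, b') -> b != b' -> ~~ odd q.
Proof.
move=> p_gt1 cbb' neq_bb'.
have [x neq_xa] := exists_ord_neq a p_gt1.
pose B := [set y | c (a, y) == c (a, b)].
have b_in_B : b \in B by rewrite inE.
have nbrs y : [set z | direct_complete p q (x, y) z & c z == c (a, b)] =
              [set (a, y') | y' in B :\ y].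
  apply/setP => -[z1 z2]; rewrite inE direct_completeE /=; apply/idP/imsetP.
    case/andP => /andP [_ neq_yz] /eqP cz.
    have /= z1a := direct_same_colour_row cbb' neq_bb' cz; subst z1; exists z2 => //.
    by rewrite !inE eq_sym neq_yz cz eqxx.
  case=> y'; rewrite !inE => /andP [neq_y'y /eqP cy'] [-> ->].
  by rewrite neq_xa eq_sym neq_y'y cy' eqxx.
(* b, b' \in B, so (x, y) always sees a vertex of colour c (a, b). *)
have odd_B y : odd #|B :\ y|.
  have card_nbrs : #|[set z | direct_complete p q (x, y) z & c z == c (a, b)]| =
                   #|B :\ y| by rewrite nbrs card_imset // => y1 y2 [].
  rewrite -card_nbrs; apply: strong_odd_col_odd so_c _; rewrite card_nbrs.
  apply/card_gt0P; case: (eqVneq y b) => [->|neq_yb]; [exists b' | exists b].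
    by rewrite !inE eq_sym neq_bb' cbb' eqxx.
  by rewrite !inE eq_sym neq_yb eqxx.
have B_full : B = setT.
  apply/setP => y; rewrite in_setT; apply/negbNE/negP => y_notin_B.
  have := odd_B y; rewrite -[#|B :\ y|]/(false + #|B :\ y|) -(negbTE y_notin_B).
  by rewrite -cardsD1 (cardsD1 b) b_in_B add1n /= odd_B.
have <- : #|B| = q by rewrite B_full cardsT card_ord.
by rewrite (cardsD1 b) b_in_B add1n /= odd_B.
Qed.

End DirectCompleteColouring.

Lemma direct_col_even p q k (c : {ffun 'I_p * 'I_q -> 'I_k}) a a' b :
  strong_odd_col (direct_complete p q) c -> 1 < q ->
  c (a, b) = c (a', b) -> a != a' -> ~~ odd p.
Proof.
move=> so_c q_gt1 caa'.
have so_c' := strong_odd_col_bij (Bijective swap_pairK swap_pairK)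
                 (@direct_complete_swap p q) so_c.
by apply: (direct_row_even so_c' (a := b)) => //; rewrite !ffunE.
Qed.

Section DirectCompleteColourClasses.
Variables (p q k : nat) (c : {ffun 'I_p * 'I_q -> 'I_k}).
Hypothesis so_c : strong_odd_col (direct_complete p q) c.

Lemma direct_odd_so_injective : 1 < p -> 1 < q -> odd p -> odd q -> injective c.
Proof.
move=> p_gt1 q_gt1 odd_p odd_q [a b] [a' b'] cuv.
case: (direct_same_colour_line so_c cuv) => /= [eq1 | eq2]; [subst a' | subst b'].
  case: (eqVneq b b') => [-> //|].
  by move/(direct_row_even so_c p_gt1 cuv); rewrite odd_q.
case: (eqVneq a a') => [-> //|].
by move/(direct_col_even so_c q_gt1 cuv); rewrite odd_p.
Qed.

Lemma direct_colour_class_leq a : 1 < p -> odd q -> #|[set x | c x == a]| <= p.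
Proof.
move=> p_gt1 odd_q; rewrite -[p in _ <= p]card_ord.
apply: (@leq_card_in _ _ fst) => -[u1 u2] [v1 v2].
rewrite !inE /= => /eqP cu /eqP cv eq1.
subst v1; case: (eqVneq u2 v2) => [-> //|].
by move/(direct_row_even so_c p_gt1 (etrans cu (esym cv))); rewrite odd_q.
Qed.

Lemma direct_colour_class_leq_max a : #|[set x | c x == a]| <= maxn p q.
Proof.
set S := [set x | c x == a].
case: (boolP [exists x in S, exists y in S, (x.1 == y.1) && (x != y)]).
  case/exists_inP => -[r b] xS /exists_inP [[r' b'] yS /andP [/eqP /= eq_r neq]].
  subst r'.
  have neq_bb' : b != b' by apply: contra neq => /eqP ->.
  have cbb' : c (r, b) = c (r, b') by move: xS yS; rewrite !inE => /eqP -> /eqP ->.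
  have row z : z \in S -> z.1 = r.
    rewrite inE => /eqP cz; apply: (direct_same_colour_row so_c cbb' neq_bb').
    by move: xS; rewrite inE cz => /eqP ->.
  apply: leq_trans (leq_maxr p q); rewrite -[q in _ <= q]card_ord.
  apply: (@leq_card_in _ _ snd) => z w zS wS.
  by move: (row z zS) (row w wS); case: z w {zS wS} => [z1 z2] [w1 w2] /= -> -> ->.
rewrite negb_exists_in => /forall_inP no_row_pair.
apply: leq_trans (leq_maxl p q); rewrite -[p in _ <= p]card_ord.
apply: (@leq_card_in _ _ fst) => z w zS wS eq1; apply/eqP.
move: (no_row_pair z zS); rewrite negb_exists_in => /forall_inP /(_ w wS).
by rewrite eq1 eqxx negbK.
Qed.

End DirectCompleteColourClasses.

Lemma direct_col_colouring p q : ~~ odd p -> has_so_col (direct_complete p q) q.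
Proof.
move=> even_p; apply/existsP; exists [ffun x : 'I_p * 'I_q => x.2]; apply/andP; split.
  apply/forallP => u; apply/forallP => v; rewrite !ffunE direct_completeE.
  by apply/implyP => /andP [].
apply/forallP => -[x y]; apply/implyP => _; apply/forallP => a.
case: (eqVneq a y) => [-> | neq_ay].
  rewrite cards_eq0; apply/orP; left; apply/eqP/setP => -[z1 z2].
  rewrite !inE ffunE direct_completeE /=.
  by case: (eqVneq z2 y); rewrite /= ?andbF ?andbT.
have -> : [set u | direct_complete p q (x, y) u & [ffun u : 'I_p * 'I_q => u.2] u == a]
          = [set (x', a) | x' in [set~ x]].
  apply/setP => -[z1 z2]; rewrite inE ffunE direct_completeE /=; apply/idP/imsetP.
    by case/andP => /andP [neq_xz _] /eqP <-; exists z1; rewrite // !inE eq_sym.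
  case=> x'; rewrite !inE => neq_x'x [-> ->].
  by rewrite eq_sym neq_x'x eq_sym neq_ay eqxx.
rewrite card_imset ?cardsC1 ?card_ord; last by move=> ? ? [].
have p_gt0 : 0 < p := leq_ltn_trans (leq0n x) (ltn_ord x).
by move: even_p p_gt0; clear x; case: p => // p' /=; rewrite negbK => ->; rewrite orbT.
Qed.

Theorem theorem4p4 (p q : nat) (hp : 2 <= p) (hq : 2 <= q) :
  [/\ chi_so (cart_rel (complete_rel p) (complete_rel q)) = p * q,
      (odd p -> odd q -> chi_so (direct_rel (complete_rel p) (complete_rel q)) = p * q),
      (~~ odd p -> odd q -> chi_so (direct_rel (complete_rel p) (complete_rel q)) = q)
    & (~~ odd p -> ~~ odd q -> chi_so (direct_rel (complete_rel p) (complete_rel q)) = minn p q)].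
Proof.
have [p_gt0 q_gt0] : 0 < p /\ 0 < q by split; apply: ltnW.
split.
- exact: chi_so_cart_complete.
- move=> odd_p odd_q; rewrite -card_prod_ord.
  apply: chi_so_injective => [u | k c so_c]; first by rewrite direct_completeE eqxx.
  exact: direct_odd_so_injective.
- move=> even_p odd_q; apply: chi_so_eq_min.
  + by rewrite card_prod_ord leq_pmull.
  + exact: direct_col_colouring.
  move=> k /existsP [c so_c].
  have := card_leq_colour_classes (fun a => direct_colour_class_leq so_c a hp odd_q).
  by rewrite card_prod_ord mulnC leq_pmul2r.
- move=> even_p even_q; apply: chi_so_eq_min.
  + by rewrite card_prod_ord (leq_trans (geq_minl p q)) ?leq_pmulr.
  + case: (leqP p q) => _; last exact: direct_col_colouring.
    apply: has_so_col_bij (Bijective swap_pairK swap_pairK)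
                          (@direct_complete_swap q p) _.
    exact: direct_col_colouring.
  move=> k /existsP [c so_c].
  have := card_leq_colour_classes (direct_colour_class_leq_max so_c).
  rewrite card_prod_ord.
  case: (leqP p q) => _.
    by rewrite leq_pmul2r.
  by rewrite mulnC leq_pmul2r.
Qed.
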